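(* Let $X$ be a nonempty compact metric space, $Y$ a compact metric space and $\mathcal Y$ an $(X)$-regularizing family for $Y$. Then the quotient space $Y/\mathcal Y$ is homeomorphic to the Cantor space.
   Context: An $(X)$-regularizing family for $Y$ is a countably infinite family $\mathcal Y$ of subsets of $Y$ such that: (a1) the members are pairwise disjoint subspaces homeomorphic to $X$; (a2) $\mathcal Y$ is null (for every $\varepsilon>0$ only finitely many members have diameter $\ge\varepsilon$); (a3) each member has dense complement in $Y$; (a4) $\bigcup\mathcal Y$ is dense in $Y$; (a5) any two points not in a common member of $\mathcal Y$ are separated by an open, closed, $\mathcal Y$-saturated subset of $Y$ (each member is contained in it or disjoint from it). $Y/\mathcal Y$ is the quotient space of the decomposition of $Y$ whose elements are the members of $\mathcal Y$ and the singletons of points of $Y\setminus\bigcup\mathcal Y$. *)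

From HB Require Import structures.
From mathcomp Require Import all_boot all_order all_algebra.
From mathcomp Require Import all_classical all_reals all_analysis.
Set Implicit Arguments. Unset Strict Implicit. Unset Printing Implicit Defensive.
Import Order.TTheory GRing.Theory Num.Theory.
Local Open Scope classical_set_scope.
Local Open Scope ring_scope.

(* Diameter of a subset of a metric space, in the extended reals
   (sup of distances; -oo for the empty set, possibly +oo). *)
Definition diam {R : realType} {M : metricType R} (A : set M) : \bar R :=
  ereal_sup [set (mdist x y)%:E | x in A & y in A].

Definition homeomorphic_subspace {X Y : topologicalType} (A : set Y) :=
  exists (f : X -> Y) (g : Y -> X),
    [/\ continuous f, f @` setT = A, (forall x, g (f x) = x)
      & {within A, continuous g}].

Definition homeomorphic (S T : topologicalType) :=
  exists (f : S -> T) (g : T -> S),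
    [/\ continuous f, continuous g, cancel f g & cancel g f].

Definition saturated {Y : Type} (YY : set (set Y)) (U : set Y) :=
  forall A, YY A -> A `<=` U \/ A `&` U = set0.

Definition regularizing_family {R : realType} (X Y : metricType R)
    (YY : set (set Y)) :=
  [/\ (countable YY /\ infinite_set YY),
      (* (a1) *)
      ((forall A B, YY A -> YY B -> A <> B -> A `&` B = set0) /\
       (forall A, YY A -> @homeomorphic_subspace X Y A)),
      (* (a2) null *)
      (forall eps : R, 0 < eps ->
         finite_set [set A | YY A /\ (eps%:E <= diam A)%E]),
      (* (a3), (a4) *)
      ((forall A, YY A -> dense (~` A)) /\ dense (\bigcup_(A in YY) A)) &
      (* (a5) *)
      (forall x y : Y, x <> y -> ~ (exists2 A, YY A & A x /\ A y) ->
         exists U : set Y, [/\ open U, closed U, saturated YY U, U x & ~ U y])].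

(* The decomposition element containing y: the member of YY containing y,
   or the singleton {y} when y lies in no member (YY pairwise disjoint). *)
Definition decomp_class {Y : Type} (YY : set (set Y)) (y : Y) : set Y :=
  [set z | z = y \/ exists2 A, YY A & A y /\ A z].

Definition decomp_space {Y : Type} (YY : set (set Y)) : Type :=
  {C : set Y | exists y, C = decomp_class YY y}.

Definition decomp_proj {Y : Type} (YY : set (set Y)) (y : Y) : decomp_space YY :=
  exist _ (decomp_class YY y) (ex_intro _ y erefl).

Section DecompTopology.
Context {Y : topologicalType} (YY : set (set Y)).
Local Notation Q := (decomp_space YY).

HB.instance Definition _ := gen_eqMixin Q.
HB.instance Definition _ := gen_choiceMixin Q.


Definition decomp_open (U : set Q) := open (decomp_proj YY @^-1` U).

Local Lemma dopT : decomp_open [set: Q].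
Proof. by rewrite /decomp_open preimage_setT; exact: openT. Qed.

Local Lemma dopI : setI_closed decomp_open.
Proof. by move=> ? ? ? ?; exact: openI. Qed.

Local Lemma dop_bigU (I : Type) (g : I -> set Q) :
  (forall i, decomp_open (g i)) -> decomp_open (\bigcup_i g i).
Proof.
move=> h; rewrite /decomp_open.
have -> : decomp_proj YY @^-1` (\bigcup_i g i) =
          \bigcup_i (decomp_proj YY @^-1` g i).
  by rewrite predeqE => y; split => -[i _ gi]; exists i.
by apply: bigcup_open => i _; exact: h.
Qed.

HB.instance Definition _ := isOpenTopological.Build Q dopT dopI dop_bigU.
End DecompTopology.

(* The decomposition space Q = Y/YY is compact (a continuous image of Y),
   zero-dimensional (the images of the clopen saturated sets given by (a5) are
   clopen) and perfect: an open point of Q would be an open class of Y, which is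
   impossible for a member of YY by (a3) and for a singleton by (a4).  The
   countably many clopen sets of the compact metric space Y yield countably many
   clopen sets of Q separating its points, hence a continuous injection e of Q
   into the Cantor space.  Pulling back the Cantor metric along e metrizes Q
   without changing its topology (a continuous bijection from a compact space
   onto a Hausdorff one is a homeomorphism), and Brouwer's characterization of
   the Cantor space, [homeomorphism_cantor_like], applies. *)

From HB Require Import structures.
From mathcomp Require Import all_boot all_order all_algebra.
From mathcomp Require Import all_classical all_reals all_analysis.
Set Implicit Arguments. Unset Strict Implicit. Unset Printing Implicit Defensive.
Local Open Scope classical_set_scope.

Lemma homeomorphic_trans (S T U : topologicalType) :
  homeomorphic S T -> homeomorphic T U -> homeomorphic S U.
Proof.
move=> [f [g [cf cg fK gK]]] [h [k [ch ck hK kK]]].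
exists (h \o f), (g \o k); split=> x /=.
- by apply: continuous_comp; [exact: cf | exact: ch].
- by apply: continuous_comp; [exact: ck | exact: cg].
- by rewrite hK fK.
- by rewrite gK kK.
Qed.

Lemma continuous_inj_hausdorff (S T : topologicalType) (f : S -> T) :
  continuous f -> injective f -> hausdorff_space T -> hausdorff_space S.
Proof.
move=> cf injf hT p q clpq; apply: injf; apply: hT => A B /cf pA /cf qB.
by have [z [Az Bz]] := clpq _ _ pA qB; exists (f z).
Qed.

Lemma zero_dimensional_hausdorff (T : topologicalType) :
  zero_dimensional T -> hausdorff_space T.
Proof.
move=> zT; rewrite open_hausdorff => x y /zT [U [[oU cU] Ux nUy]].
exists (U, ~` U); first by split; rewrite inE.
by split => //=; [exact: closed_openC | rewrite setICr].
Qed.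

Lemma continuous_inv_compact (S T : topologicalType) (f : S -> T) (g : T -> S) :
  compact [set: S] -> hausdorff_space T -> continuous f ->
  cancel f g -> cancel g f -> continuous g.
Proof.
move=> cS hT cf fK gK; apply/continuousP => A oA.
have -> : g @^-1` A = ~` (f @` ~` A).
  rewrite eqEsubset; split => t /=.
    by move=> Agt [s nAs fst]; apply: nAs; rewrite -fst fK in Agt.
  by move=> nfnA; apply: contrapT => nAgt; apply: nfnA; exists (g t).
rewrite openC; apply: compact_closed hT _.
apply: continuous_compact; first exact: continuous_subspaceT.
by apply: subclosed_compact cS _ => //; exact: open_closedC.
Qed.

Lemma homeomorphic_cantor_like (S T : topologicalType) :
  homeomorphic S T -> cantor_like S -> cantor_like T.
Proof.
move=> [f [g [cf cg fK gK]]] [pS cS hS zS]; split.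
- apply/perfectTP => t ot; move/perfectTP: pS => /(_ (g t)); apply.
  have -> : [set g t] = f @^-1` [set t].
    by rewrite eqEsubset; split => s /= => [->|<-]; rewrite ?gK ?fK.
  exact: (continuousP _).1 cf _ ot.
- have -> : [set: T] = f @` setT.
    by rewrite eqEsubset; split => // t _; exists (g t).
  by apply: continuous_compact => //; exact: continuous_subspaceT.
- exact: continuous_inj_hausdorff cg (can_inj gK) hS.
- move=> x y xy; have /zS[U [clU Ugx nUgy]] : g x != g y by rewrite (can_eq gK).
  by exists (g @^-1` U); split => //; exact: preimage_clopen.
Qed.

Definition pointed_at (T : Type) (t0 : T) : Type := T.
HB.instance Definition _ (R : realType) (T : pseudoMetricType R) (t0 : T) :=
  PseudoMetric.copy (pointed_at t0) T.
HB.instance Definition _ (R : realType) (T : pseudoMetricType R) (t0 : T) :=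
  isPointed.Build (pointed_at t0) t0.

Lemma clopen_indicator_continuous (T : topologicalType) (U : set T) :
  clopen U -> continuous (fun x => `[< U x >] : bool).
Proof.
move=> [oU cU] x A /nbhs_singleton Ax /=.
have [Ux|nUx] := pselect (U x).
- apply: filterS (open_nbhs_nbhs (conj oU Ux)) => z Uz /=.
  by move: Ax; rewrite !asboolT.
- apply: filterS (open_nbhs_nbhs (conj (closed_openC cU) nUx)) => z nUz /=.
  by move: Ax; rewrite !asboolF.
Qed.

Lemma separating_clopens_cantor_embedding (T : topologicalType)
    (V : nat -> set T) :
  (forall n, clopen (V n)) -> (forall x y, x <> y -> exists n, V n x /\ ~ V n y) ->
  exists e : T -> cantor_space, continuous e /\ injective e.
Proof.
move=> clV sepV; exists (fun x n => `[< V n x >]); split.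
  move=> x; apply/pointwise_cvgP => n.
  exact: clopen_indicator_continuous.
move=> x y exy; apply: contrapT => /sepV [n [Vx nVy]]; apply: nVy.
by have /= := congr1 (fun f => f n) exy; rewrite asboolT // => /esym/asboolP.
Qed.

Lemma cantor_like_embedding_homeomorphic (R : realType) (T : topologicalType)
    (t0 : T) (e : T -> cantor_space) :
  cantor_like T -> continuous e -> injective e -> homeomorphic T cantor_space.
Proof.
move=> cT ce inje.
pose M : pseudoPMetricType R := @pointed_at (initial_topology e) t0.
have hM : hausdorff_space M.
  apply: (@continuous_inj_hausdorff M _ e) inje cantor_space_hausdorff.
  exact: initial_continuous.
have cid : continuous (id : T -> M).
  exact: (@continuous_comp_initial _ _ _ e (id : T -> initial_topology e)).
have TM : homeomorphic T M.
  exists id, id; split => //.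
  by apply: continuous_inv_compact hM cid _ _ => //; case: cT.
have [f [cf _]] := homeomorphism_cantor_like (homeomorphic_cantor_like TM cT).
apply: homeomorphic_trans TM _; exists f^-1%FUN, f; split => // [|x|x].
- apply: continuous_inv_compact cantor_space_compact hM cf _ _ => x.
    by rewrite funK ?inE.
  by rewrite invK ?inE.
- by rewrite invK ?inE.
- by rewrite funK ?inE.
Qed.

Section decomposition_space.
Context {Y : topologicalType} (YY : set (set Y)).
Local Notation Q := (decomp_space YY).
Local Notation p := (decomp_proj YY).

Lemma decomp_proj_surj (q : Q) : exists y, q = p y.
Proof. by case: q => C [y eC]; exists y; exact: eq_exist. Qed.

Lemma decomp_proj_continuous : continuous p.
Proof. by apply/continuousP. Qed.

Lemma decomp_compact : compact [set: Y] -> compact [set: Q].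
Proof.
move=> cY; have -> : [set: Q] = p @` setT.
  by rewrite eqEsubset; split => // q _; have [y ->] := decomp_proj_surj q; exists y.
by apply: continuous_compact cY; exact/continuous_subspaceT/decomp_proj_continuous.
Qed.

Hypothesis YY_disjoint : forall A B, YY A -> YY B -> A <> B -> A `&` B = set0.

Lemma decomp_class_member A y : YY A -> A y -> decomp_class YY y = A.
Proof.
move=> YA Ay; rewrite eqEsubset; split => [z [->//|[B YB [By Bz]]]|z Az].
  have [->//|nAB] := pselect (A = B).
  by have := YY_disjoint YA YB nAB; rewrite -subset0 => /(_ y)[].
by right; exists A.
Qed.

Lemma decomp_class_single y :
  ~ (exists2 A, YY A & A y) -> decomp_class YY y = [set y].
Proof.
move=> nA; rewrite eqEsubset; split => [z [//|[B YB [By _]]]|z ->]; last by left.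
by case: nA; exists B.
Qed.

Lemma decomp_proj_eqP y z : p z = p y <-> decomp_class YY y z.
Proof.
split=> [/(congr1 sval) /= <-|[->//|[A YA [Ay Az]]]]; first by left.
by apply: eq_exist; rewrite (decomp_class_member YA Ay) (decomp_class_member YA Az).
Qed.

Lemma saturated_preimage_image U : saturated YY U -> p @^-1` (p @` U) = U.
Proof.
move=> sU; rewrite eqEsubset; split => [z [u Uu /decomp_proj_eqP]|z Uz].
  case=> [<-//|[A YA [Az Au]]].
  by case: (sU A YA) => [/(_ z Az)//|]; rewrite -subset0 => /(_ u)[].
by exists z.
Qed.

Lemma decomp_image_clopen U : saturated YY U -> clopen U -> clopen (p @` U).
Proof.
move=> sU [oU cU]; split.
  by change (open (p @^-1` (p @` U))); rewrite saturated_preimage_image.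
rewrite -openC; change (open (p @^-1` ~` (p @` U))).
by rewrite -preimage_setC saturated_preimage_image // openC.
Qed.

Hypothesis YY_codense : forall A, YY A -> dense (~` A).
Hypothesis YY_dense : dense (\bigcup_(A in YY) A).

Lemma decomp_perfect : perfect_set [set: Q].
Proof.
apply/perfectTP => q.
have [y -> oy] := decomp_proj_surj q.
have : open (decomp_class YY y).
  suff -> : decomp_class YY y = p @^-1` [set p y] by exact: oy.
  by rewrite eqEsubset; split => z /decomp_proj_eqP.
have [[A YA Ay] oA|nA] := pselect (exists2 A, YY A & A y).
  rewrite (decomp_class_member YA Ay) in oA.
  by have [z [Az nAz]] := YY_codense YA (ex_intro _ y Ay) oA.
rewrite decomp_class_single // => oy'.
have [z [-> [A YA Ay]]] := YY_dense (ex_intro _ y erefl) oy'.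
by apply: nA; exists A.
Qed.

Hypothesis YY_separating : forall x y : Y, x <> y ->
  ~ (exists2 A, YY A & A x /\ A y) ->
  exists U : set Y, [/\ open U, closed U, saturated YY U, U x & ~ U y].

Lemma decomp_separation (q1 q2 : Q) : q1 <> q2 -> exists U : set Y,
  [/\ saturated YY U, clopen U, (p @` U) q1 & ~ (p @` U) q2].
Proof.
have [x ->] := decomp_proj_surj q1; have [y ->] := decomp_proj_surj q2 => nxy.
have [||U [oU cU sU Ux nUy]] := YY_separating (x := x) (y := y).
- by move=> exy; apply: nxy; rewrite exy.
- by case=> A YA [Ax Ay]; apply: nxy; apply/decomp_proj_eqP; right; exists A.
exists U; split => // pUy.
by apply: nUy; rewrite -(saturated_preimage_image sU).
Qed.

Lemma decomp_zero_dimensional : zero_dimensional Q.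
Proof.
move=> q1 q2 /eqP /decomp_separation [U [sU cU U1 U2]].
by exists (p @` U); split => //; exact: decomp_image_clopen.
Qed.

Lemma decomp_separating_clopens (C : nat -> set Y) :
  (forall U, clopen U -> exists n, C n = U) ->
  exists V : nat -> set Q, (forall n, clopen (V n)) /\
    (forall q1 q2, q1 <> q2 -> exists n, V n q1 /\ ~ V n q2).
Proof.
move=> C_onto.
pose V n := if `[< saturated YY (C n) /\ clopen (C n) >] then p @` C n else set0.
exists V; split => [n|q1 q2 /decomp_separation [U [sU cU U1 U2]]].
  rewrite /V; case: asboolP => [[]|_]; last exact: clopen0.
  exact: decomp_image_clopen.
have [n CnU] := C_onto U cU; exists n; rewrite /V CnU.
by rewrite asboolT.
Qed.

Lemma decomp_cantor_like : compact [set: Y] -> cantor_like Q.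
Proof.
move=> cY; split.
- exact: decomp_perfect.
- exact: decomp_compact.
- exact/zero_dimensional_hausdorff/decomp_zero_dimensional.
- exact: decomp_zero_dimensional.
Qed.

End decomposition_space.

Theorem lemma2 (R : realType) (X Y : metricType R) (YY : set (set Y)) :
  compact [set: X] -> [set: X] !=set0 ->
  compact [set: Y] ->
  @regularizing_family R X Y YY ->
  homeomorphic (decomp_space YY) cantor_space.
Proof.
move=> _ [x0 _] cY [[_ YY_infinite] [YY_disjoint YY_homeo] _
  [YY_codense YY_dense] YY_separating].
have [A YY_A] : YY !=set0.
  by apply/set0P/negP => /eqP YY0; apply: YY_infinite; rewrite YY0.
have [f _] := YY_homeo A YY_A; pose y0 := f x0.
have [C C_onto] : exists C : nat -> set Y,
    forall U, clopen U -> exists n, C n = U.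
  have /unsquash C := @clopen_surj R (pointed_at y0) cY.
  by exists C => U clU; have [n _ <-] := @surj _ _ _ _ C _ clU; exists n.
have [V [V_clopen V_sep]] :=
  decomp_separating_clopens YY_disjoint YY_separating C_onto.
have [e [ce inje]] := separating_clopens_cantor_embedding V_clopen V_sep.
apply: (cantor_like_embedding_homeomorphic R (decomp_proj YY y0) _ ce inje).
exact: decomp_cantor_like.
Qed.
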